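(* No minimally non-perfectly divisible graph contains a simplicial vertex.
   Context: All graphs are finite and simple. A vertex is simplicial if its neighbourhood is a clique. For $S\subseteq V(G)$, $G[S]$ is the subgraph induced by $S$. $\omega(G)$ is the number of vertices in a largest clique of $G$ and $\chi(G)$ the chromatic number. A graph $G$ is perfect if $\chi(H)=\omega(H)$ for every induced subgraph $H$ of $G$. A partition $(A,B)$ of $V(G)$ is good if $G[A]$ is perfect and $\omega(G[B])<\omega(G)$. A graph $G$ is perfectly divisible if every induced subgraph $H$ of $G$ with at least one edge admits a good partition (of $V(H)$). A graph is minimally non-perfectly divisible if it is not perfectly divisible but each of its proper induced subgraphs is perfectly divisible. *)

(* A finite simple graph is a symmetric irreflexive boolean
   relation [e] on a finite vertex type [T]; induced subgraphs G[S] are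
   represented by vertex subsets [S : {set T}]. *)
From mathcomp Require Import all_boot.
Set Implicit Arguments. Unset Strict Implicit. Unset Printing Implicit Defensive.

Section Graphs.
Variables (T : finType) (e : rel T).

Definition simple_graph : Prop := symmetric e /\ irreflexive e.

Definition is_clique (A : {set T}) : bool :=
  [forall x in A, forall y in A, (x != y) ==> e x y].

Definition omega (S : {set T}) : nat :=
  \max_(A : {set T} | (A \subset S) && is_clique A) #|A|.

Definition colorable (S : {set T}) (k : nat) : bool :=
  [exists f : {ffun T -> 'I_(#|T|.+1)},
     [forall x in S, f x < k] &&
     [forall x in S, forall y in S, (x != y) && e x y ==> (f x != f y)]].

Lemma colorable_ex (S : {set T}) : exists k, colorable S k.
Proof.
exists #|T|.+1; apply/existsP.
have H : forall x : T, enum_rank x < #|T|.+1 by move=> x; apply: ltnW; apply: ltn_ord.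
exists [ffun x => Ordinal (H x)]; apply/andP; split.
  by apply/forallP => x; apply/implyP => _; rewrite ffunE /=.
apply/forallP => x; apply/implyP => _; apply/forallP => y; apply/implyP => _.
apply/implyP => /andP [nxy _]; rewrite !ffunE; apply: contra nxy => /eqP [].
by move/val_inj/enum_rank_inj => ->.
Qed.

Definition chi (S : {set T}) : nat := ex_minn (colorable_ex S).

Definition perfect (S : {set T}) : Prop :=
  forall H : {set T}, H \subset S -> chi H = omega H.

Definition good_partition (S A : {set T}) : Prop :=
  A \subset S /\ perfect A /\ omega (S :\: A) < omega S.

Definition has_edge (S : {set T}) : Prop :=
  exists x y, [/\ x \in S, y \in S & e x y].

Definition perfectly_divisible (S : {set T}) : Prop :=
  forall H : {set T}, H \subset S -> has_edge H ->
    exists A : {set T}, good_partition H A.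

Definition minimally_non_pd : Prop :=
  ~ perfectly_divisible [set: T] /\
  forall S : {set T}, S \proper [set: T] -> perfectly_divisible S.

Definition simplicial (v : T) : bool := is_clique [set u | e v u].
End Graphs.

(* Adding a simplicial vertex v to a perfect graph keeps it perfect: in any
   induced subgraph H containing v, the neighbours of v in H together with v
   form a clique, so an omega(H)-colouring of H - v leaves a colour free for v.
   Hence if (A, B) is a good partition of G - v, then (A + v, B) is one of G;
   and if G - v has no edge, ({v}, V - v) is good since omega(G - v) <= 1 < 2
   <= omega(G). *)
From mathcomp Require Import all_boot.
Set Implicit Arguments. Unset Strict Implicit. Unset Printing Implicit Defensive.

Lemma exists_ltn_notin (s : seq nat) k : size s < k -> exists2 c, c < k & c \notin s.
Proof.
move=> lt_s_k; have /allPn[c] : ~~ all (fun c => c \in s) (iota 0 k).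
  apply: contraTN lt_s_k => /allP/(uniq_leq_size (iota_uniq 0 k)).
  by rewrite size_iota -leqNgt.
by rewrite mem_iota add0n => c_lt_k c_notin_s; exists c.
Qed.

Section Graph.
Variables (T : finType) (e : rel T).

Definition neighbours (S : {set T}) (v : T) : {set T} := [set u in S | e v u].

Lemma colorableP (S : {set T}) k :
  reflect (exists f : {ffun T -> 'I_(#|T|.+1)},
     (forall x, x \in S -> f x < k) /\
     (forall x y, x \in S -> y \in S -> x != y -> e x y -> f x != f y))
  (colorable e S k).
Proof.
apply: (iffP existsP) => [[f /andP[/forallP f_lt /forallP f_proper]]|[f [f_lt f_proper]]].
  exists f; split=> [x xS|x y xS yS nxy exy]; first by have := f_lt x; rewrite xS.
  by have := f_proper x; rewrite xS => /forallP/(_ y); rewrite yS nxy exy.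
exists f; apply/andP; split; apply/forallP=> x; apply/implyP=> xS; first exact: f_lt.
by apply/forallP=> y; apply/implyP=> yS; apply/implyP=> /andP[]; apply: f_proper.
Qed.

Lemma chi_colorable (S : {set T}) : colorable e S (chi e S).
Proof. by rewrite /chi; case: ex_minnP. Qed.

Lemma chi_min (S : {set T}) k : colorable e S k -> chi e S <= k.
Proof. by rewrite /chi; case: ex_minnP => m _; apply. Qed.

Lemma colorable_leq (S : {set T}) k k' : k <= k' -> colorable e S k -> colorable e S k'.
Proof.
move=> le_k_k' /colorableP[f [f_lt f_proper]]; apply/colorableP; exists f.
by split=> // x xS; apply: leq_trans (f_lt x xS) le_k_k'.
Qed.

Lemma cliqueP (A : {set T}) :
  reflect (forall x y, x \in A -> y \in A -> x != y -> e x y) (is_clique e A).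
Proof.
apply: (iffP forallP) => [cA x y xA yA nxy|cA x].
  by have := cA x; rewrite xA => /forallP/(_ y); rewrite yA nxy.
by apply/implyP=> xA; apply/forallP=> y; apply/implyP=> yA; apply/implyP; apply: cA.
Qed.

Lemma leq_omega (S A : {set T}) : A \subset S -> is_clique e A -> #|A| <= omega e S.
Proof.
by move=> sAS cA; apply: (leq_bigmax_cond (F := fun A : {set T} => #|A|)); rewrite sAS.
Qed.

Lemma omega_leq (S : {set T}) k :
  (forall A : {set T}, A \subset S -> is_clique e A -> #|A| <= k) -> omega e S <= k.
Proof. by move=> le_k; apply/bigmax_leqP => A /andP[]; apply: le_k. Qed.

Lemma omegaS (S S' : {set T}) : S \subset S' -> omega e S <= omega e S'.
Proof.
by move=> sSS'; apply: omega_leq => A sAS; apply: leq_omega (subset_trans sAS sSS').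
Qed.

Lemma omega_le_card (S : {set T}) : omega e S <= #|S|.
Proof. by apply: omega_leq => A sAS _; apply: subset_leq_card. Qed.

Lemma omega_le_chi (S : {set T}) : omega e S <= chi e S.
Proof.
apply: omega_leq => A sAS /cliqueP cA.
have /colorableP[f [f_lt f_proper]] := chi_colorable S.
rewrite cardE -(size_map (fun x => val (f x))) -(size_iota 0 (chi e S)).
apply: uniq_leq_size => [|i /mapP[x]]; last first.
  by rewrite mem_enum => xA ->; rewrite mem_iota f_lt // (subsetP sAS).
rewrite map_inj_in_uniq ?enum_uniq // => x y; rewrite !mem_enum => xA yA /val_inj.
apply: contra_eq => nxy.
by apply: f_proper; rewrite ?(subsetP sAS) ?cA.
Qed.

Lemma perfect0 : perfect e set0.
Proof.
move=> H; rewrite subset0 => /eqP ->; apply/eqP; rewrite eqn_leq omega_le_chi andbT.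
apply: chi_min; apply/colorableP; exists [ffun => ord0].
by split=> x; rewrite inE.
Qed.

Section SimpleGraph.
Hypotheses (esym : symmetric e) (eirr : irreflexive e).

(* The bound on [k] is forced by the colour type ['I_#|T|.+1] of [colorable]. *)
Lemma colorable_setU1 (S : {set T}) v k :
  k <= #|T|.+1 -> #|neighbours S v| < k -> colorable e S k -> colorable e (v |: S) k.
Proof.
move=> k_small small_nbhd /colorableP[f [f_lt f_proper]].
set used := [seq val (f u) | u <- enum (neighbours S v)].
have [c c_lt_k c_free] : exists2 c, c < k & c \notin used.
  by apply: exists_ltn_notin; rewrite size_map -cardE.
have c_small : c < #|T|.+1 by apply: leq_trans k_small.
have used_nbhd y : y \in S -> e v y -> val (f y) \in used.
  by move=> yS evy; apply: map_f; rewrite mem_enum inE yS.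
apply/colorableP; exists [ffun x => if x == v then Ordinal c_small else f x].
split=> [x|x y]; rewrite !ffunE.
  case: eqVneq => [_ _ //|xv]; rewrite in_setU1 (negbTE xv); exact: f_lt.
case: (eqVneq x v) => [->|xv]; case: (eqVneq y v) => [->|yv];
  rewrite ?eqxx // !in_setU1 ?(negbTE xv) ?(negbTE yv) /=.
- move=> _ yS _ evy; apply: contra c_free => /eqP/(congr1 val)/= ->; exact: used_nbhd.
- move=> xS _ _ exv; apply: contra c_free => /eqP/(congr1 val)/= <-.
  by apply: used_nbhd; rewrite // esym.
- exact: f_proper.
Qed.

Lemma clique_setU1_neighbours (S : {set T}) v :
  simplicial e v -> is_clique e (v |: neighbours S v).
Proof.
move=> /cliqueP sv; apply/cliqueP => x y.
move=> /setU1P[->|/setIdP[_ evx]] /setU1P[->|/setIdP[_ evy]]; rewrite ?eqxx //.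
  by rewrite esym.
by apply: sv; rewrite inE.
Qed.

Lemma perfect_setU1 (A : {set T}) v :
  simplicial e v -> perfect e A -> perfect e (v |: A).
Proof.
move=> sv pA H sHvA; have [vH|vNH] := boolP (v \in H); last first.
  by apply: pA; apply/subsetP => x xH; have /setU1P[xv|//] := subsetP sHvA x xH;
    rewrite -xv xH in vNH.
set H' := H :\ v.
have sH'A : H' \subset A.
  by apply/subsetP => x /setD1P[xv xH]; have /setU1P[/eqP|] := subsetP sHvA x xH;
    rewrite ?(negbTE xv).
apply/eqP; rewrite eqn_leq omega_le_chi andbT; apply: chi_min.
rewrite -{1}(setD1K vH); apply: colorable_setU1.
- exact: leq_trans (omega_le_card H) (leqW (max_card _)).
- have vN : v \notin neighbours H' v by rewrite inE eirr andbF.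
  have := cardsU1 v (neighbours H' v); rewrite vN add1n => <-.
  apply: leq_omega; last exact: clique_setU1_neighbours.
  by apply/subsetP => x /setU1P[-> // | /setIdP[/setD1P[_ xH] _]].
- apply: colorable_leq (chi_colorable H').
  by rewrite (pA H' sH'A) omegaS ?subD1set.
Qed.

Lemma has_edgeP (S : {set T}) :
  reflect (has_edge e S) [exists x in S, exists y in S, e x y].
Proof.
apply: (iffP exists_inP) => [[x xS /exists_inP[y yS exy]]|[x [y [xS yS exy]]]].
  by exists x, y.
by exists x => //; apply/exists_inP; exists y.
Qed.

Lemma has_edge_omega (S : {set T}) : has_edge e S -> 1 < omega e S.
Proof.
move=> [x [y [xS yS exy]]]; have nxy : x != y by apply: contraTneq exy => ->; rewrite eirr.
have <- : #|[set x; y]| = 2 by rewrite cards2 nxy.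
apply: leq_omega; first by rewrite subUset !sub1set xS.
apply/cliqueP => a b; rewrite !inE.
by move=> /orP[]/eqP-> /orP[]/eqP->; rewrite ?eqxx // esym.
Qed.

Lemma omega_edgeless (S : {set T}) : ~ has_edge e S -> omega e S <= 1.
Proof.
move=> noedge; apply: omega_leq => A sAS /cliqueP cA; apply/card_le1_eqP => x y xA yA.
apply/eqP/negPn/negP => nxy; apply: noedge; exists x, y.
by split; rewrite ?(subsetP sAS) // cA // eq_sym.
Qed.

Lemma good_partition_simplicial (S : {set T}) v :
  simplicial e v -> v \in S -> has_edge e S ->
  (has_edge e (S :\ v) -> exists A, good_partition e (S :\ v) A) ->
  exists A, good_partition e S A.
Proof.
move=> sv vS edgeS pd_Sv; case: (has_edgeP (S :\ v)) => [/pd_Sv[A [sA [pA ltA]]]|noedge].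
  exists (v |: A); split; first by rewrite subUset sub1set vS (subset_trans sA) ?subD1set.
  split; first exact: perfect_setU1.
  by rewrite -setDDl; apply: leq_trans ltA (omegaS (subD1set S v)).
exists [set v]; split; first by rewrite sub1set.
split; first by rewrite -[[set v]]setU0; apply: perfect_setU1 => //; apply: perfect0.
by apply: leq_trans (has_edge_omega edgeS); rewrite ltnS omega_edgeless.
Qed.

End SimpleGraph.
End Graph.

Theorem lemma3 (T : finType) (e : rel T) :
  simple_graph e -> minimally_non_pd e -> forall v : T, ~~ simplicial e v.
Proof.
move=> [esym eirr] [not_pd proper_pd] v; apply/negP => sv; apply: not_pd => H _ edgeH.
have [pH|] := boolP (H \proper [set: T]).
  exact: (proper_pd H pH) H (subxx H) edgeH.
rewrite properT negbK => /eqP HT; subst H.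
have proper_Tv : [set: T] :\ v \proper [set: T].
  by rewrite properT; apply/eqP => /setP/(_ v); rewrite !inE eqxx.
apply: (good_partition_simplicial esym eirr sv) => //.
exact: (proper_pd _ proper_Tv) _ (subxx _).
Qed.
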